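(* Fix $n\ge1$. Define $i_n:\mathrm{Conf}_n(\mathbb C)\to\mathrm{Conf}^{lf}_\infty(\mathbb C)$ by $i_n(z_1,\dots,z_n)=(z_1,\dots,z_n,R,R+1,R+2,\dots)$ where $R=1+\max_j|z_j|$. Then $i_n$ is continuous with $i_n(1,2,\dots,n)=\widetilde{\mathbb N}$, and the induced homomorphism \[ (i_n)_*:\pi_1\bigl(\mathrm{Conf}_n(\mathbb C),(1,\dots,n)\bigr)\to\pi_1\bigl(\mathrm{Conf}^{lf}_\infty(\mathbb C),\widetilde{\mathbb N}\bigr) \] is injective.
   Context: $\mathrm{Conf}_n(\mathbb C)=\{(z_1,\dots,z_n)\in\mathbb C^n: z_i\ne z_j \text{ for } i\neq j\}$ with the usual topology. $\mathrm{Conf}^{lf}_\infty(\mathbb C)$ is the set of sequences $(x_j)_{j\ge1}$ of pairwise distinct complex numbers such that $\{j:|x_j|\le R\}$ is finite for all $R>0$, with metric $d_{\Sigma}(x,y)=\sum_j2^{-j}\min\{|x_j-y_j|,1\}+d_{\mathcal V}(P(x),P(y))$, where $P(x)=\{x_j\}$ and $d_{\mathcal V}$ is the vague metric $d_{\mathcal V}(A,B)=\sum_j 2^{-j}\frac{|\sum_{a\in A}\varphi_j(a)-\sum_{b\in B}\varphi_j(b)|}{1+|\sum_{a\in A}\varphi_j(a)-\sum_{b\in B}\varphi_j(b)|}$ for a fixed sequence $(\varphi_j)$ of compactly supported continuous real functions such that for each $m$ those supported in $\{|z|\le m\}$ are sup-norm dense among such functions supported in $\{|z|\le m\}$. $\widetilde{\mathbb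 N}=(1,2,3,\dots)$. *)

From Stdlib Require Import Reals.
From Coquelicot Require Import Coquelicot.
From mathcomp Require Import ssreflect ssrbool ssrfun eqtype ssrnat seq fintype bigop.
Open Scope R_scope.

Definition cont_on {A B : Type} (dA : A -> A -> R) (SA : A -> Prop)
  (dB : B -> B -> R) (f : A -> B) : Prop :=
  forall a, SA a -> forall eps, 0 < eps -> exists delta, 0 < delta /\
    forall a', SA a' -> dA a a' < delta -> dB (f a) (f a') < eps.

Definition I01 (t : R) : Prop := 0 <= t <= 1.
Definition dR (s t : R) : R := Rabs (s - t).
Definition I01sq (p : R * R) : Prop := I01 (fst p) /\ I01 (snd p).
Definition dR2 (p q : R * R) : R :=
  Rmax (Rabs (fst p - fst q)) (Rabs (snd p - snd q)).

Definition loop {X : Type} (dX : X -> X -> R) (S : X -> Prop) (b : X)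
  (g : R -> X) : Prop :=
  cont_on dR I01 dX g /\ (forall t, I01 t -> S (g t)) /\ g 0 = b /\ g 1 = b.

(* homotopy of loops relative to the endpoints (equality in pi_1(S,b)) *)
Definition homotopic_rel {X : Type} (dX : X -> X -> R) (S : X -> Prop) (b : X)
  (g1 g2 : R -> X) : Prop :=
  exists H : R * R -> X,
    cont_on dR2 I01sq dX H /\
    (forall p, I01sq p -> S (H p)) /\
    (forall s, I01 s -> H (s, 0) = g1 s /\ H (s, 1) = g2 s) /\
    (forall t, I01 t -> H (0, t) = b /\ H (1, t) = b).

Definition in_Conf (n : nat) (z : 'I_n -> C) : Prop :=
  forall k l : 'I_n, k <> l -> z k <> z l.

Definition dist_n (n : nat) (z w : 'I_n -> C) : R :=
  \big[Rmax/0]_(k < n) Cmod (Cminus (z k) (w k)).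

Definition base_n (n : nat) : 'I_n -> C := fun k => RtoC (INR (nat_of_ord k + 1)).

(* sequences are indexed from 0: x 0 = x_1, x 1 = x_2, ... *)

Definition in_Conf_lf (x : nat -> C) : Prop :=
  (forall j l : nat, j <> l -> x j <> x l) /\
  (forall r : R, 0 < r -> exists N : nat, forall j : nat, (N <= j)%nat -> r < Cmod (x j)).

Definition NN : nat -> C := fun j => RtoC (INR (j + 1)).

Definition cont_C (f : C -> R) : Prop :=
  forall z eps, 0 < eps -> exists delta, 0 < delta /\
    forall w, Cmod (Cminus w z) < delta -> Rabs (f w - f z) < eps.

Definition supported_in (m : R) (f : C -> R) : Prop :=
  forall z, m < Cmod z -> f z = 0.

Definition compactly_supported (f : C -> R) : Prop :=
  exists m : R, supported_in m f.

(* the fixed sequence (phi_j)_{j>=1} (phi 0 = phi_1, ...) *)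
Definition admissible (phi : nat -> C -> R) : Prop :=
  (forall j, cont_C (phi j) /\ compactly_supported (phi j)) /\
  (forall m : nat, (1 <= m)%nat ->
     forall f : C -> R, cont_C f -> supported_in (INR m) f ->
     forall eps, 0 < eps ->
       exists j, supported_in (INR m) (phi j) /\
                 forall z, Rabs (f z - phi j z) < eps).

(* sum_{a in P(x)} f(a); since the x_j are pairwise distinct this is
   sum_j f(x_j) (finitely many nonzero terms for compactly supported f) *)
Definition Psum (f : C -> R) (x : nat -> C) : R := Series (fun j => f (x j)).

Definition dV (phi : nat -> C -> R) (x y : nat -> C) : R :=
  Series (fun j => (/ 2) ^ (S j) *
    (Rabs (Psum (phi j) x - Psum (phi j) y) /
     (1 + Rabs (Psum (phi j) x - Psum (phi j) y)))).

Definition dSigma (phi : nat -> C -> R) (x y : nat -> C) : R :=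
  Series (fun j => (/ 2) ^ (S j) * Rmin (Cmod (Cminus (x j) (y j))) 1)
  + dV phi x y.

Definition iota_n (n : nat) (z : 'I_n -> C) : nat -> C :=
  let R0 := 1 + \big[Rmax/0]_(k < n) Cmod (z k) in
  fun j => match (insub j : option 'I_n) with
           | Some k => z k
           | None => RtoC (R0 + INR (j - n))
           end.

(* Each coordinate of [iota_n n z] is 1-Lipschitz in [z]: the first [n] are the [z_k]
   themselves and the others are translates of [1 + max_k |z_k|], which is 1-Lipschitz.
   The vague part of [dSigma] is continuous too: a compactly supported test function only
   sees the first few points of [iota_n n z], uniformly in [z], and the weights [2^-j]
   make the tails of both series uniformly small.
   For injectivity on [pi_1], truncation to the first [n] coordinates is a continuous left
   inverse of [iota_n n] from [Conf^lf] to [Conf_n] preserving base points, so it carries a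
   homotopy between the images of two loops back to a homotopy between the loops. *)

From Stdlib Require Import Reals Lra FunctionalExtensionality.
From Coquelicot Require Import Coquelicot.
From mathcomp Require Import ssreflect ssrbool ssrfun eqtype ssrnat seq fintype bigop.
Open Scope R_scope.

Lemma bigmax_ge {I : eqType} (r : seq I) (F : I -> R) k :
  k \in r -> F k <= \big[Rmax/0]_(i <- r) F i.
Proof.
elim: r => [|a r IH] //; rewrite in_cons big_cons => /orP [/eqP->|kr].
- exact: Rmax_l.
- exact: Rle_trans (IH kr) (Rmax_r _ _).
Qed.

Lemma bigmax_le {I : Type} (r : seq I) (F : I -> R) c :
  (forall i, F i <= c) -> 0 <= c -> \big[Rmax/0]_(i <- r) F i <= c.
Proof. by move=> Fc c0; apply: (big_ind (fun x => x <= c)) => // x y; apply: Rmax_lub. Qed.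

Lemma bigmax_ge0 {I : Type} (r : seq I) (F : I -> R) : 0 <= \big[Rmax/0]_(i <- r) F i.
Proof.
elim: r => [|a r IH]; rewrite ?big_nil ?big_cons; first exact: Rle_refl.
exact: Rle_trans IH (Rmax_r _ _).
Qed.

Lemma Rmax_lip a b x y : Rabs (Rmax a x - Rmax b y) <= Rmax (Rabs (a - b)) (Rabs (x - y)).
Proof.
rewrite /Rmax /Rabs.
repeat match goal with |- context [Rle_dec ?u ?v] => case: (Rle_dec u v) => ? end;
repeat match goal with
  | |- context [Rcase_abs ?u] => destruct (Rcase_abs u)
  | _ : context [Rcase_abs ?u] |- _ => destruct (Rcase_abs u)
  end; lra.
Qed.

Lemma bigmax_lip {I : Type} (r : seq I) (F G : I -> R) :
  Rabs (\big[Rmax/0]_(i <- r) F i - \big[Rmax/0]_(i <- r) G i)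
  <= \big[Rmax/0]_(i <- r) Rabs (F i - G i).
Proof.
elim: r => [|a r IH]; first by rewrite !big_nil Rminus_0_r Rabs_R0; apply: Rle_refl.
rewrite !big_cons; apply: Rle_trans (Rmax_lip _ _ _ _) _.
exact: Rle_max_compat_l IH.
Qed.

Lemma Cmod_minus_sym (a b : C) : Cmod (a - b) = Cmod (b - a).
Proof. by rewrite -Cmod_opp; congr Cmod; ring. Qed.

Lemma Cmod_triangle_inv (a b : C) : Rabs (Cmod a - Cmod b) <= Cmod (a - b).
Proof. rewrite !Cmod_norm; exact: norm_triangle_inv. Qed.

Lemma half_pow_pos m : 0 < (/2)^m.
Proof. apply: pow_lt; lra. Qed.

Lemma half_pow_le {m k} : (k <= m)%nat -> (/2)^m <= (/2)^k.
Proof.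
move=> km; rewrite -(subnKC km) pow_add.
have : (/2)^(m - k) <= 1.
  by elim: (m - k)%nat => /= [|p IH]; [lra | have := half_pow_pos p; nra].
have := half_pow_pos k; nra.
Qed.

Lemma is_series_half_pow : is_series (fun j => (/2)^(S j)) 1.
Proof.
have geom := is_series_scal_l (/2) _ _ (is_series_geom (/2) ltac:(rewrite Rabs_pos_eq; lra)).
have -> : 1 = scal (/2) (/(1 - /2)) by rewrite /scal /= /mult /=; field.
exact: is_series_ext geom.
Qed.

Lemma ex_series_half_pow : ex_series (fun j => (/2)^(S j)).
Proof. exists 1; exact: is_series_half_pow. Qed.

Lemma Series_half_pow : Series (fun j => (/2)^(S j)) = 1.
Proof. exact: is_series_unique is_series_half_pow. Qed.

Lemma Series_finite_support a K :
  (forall k, (K < k)%nat -> a k = 0) -> Series a = sum_f_R0 a K.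
Proof.
move=> aK; rewrite /Series (Lim_seq_ext_loc _ (fun _ => sum_f_R0 a K)) ?Lim_seq_const //.
exists K => m Km; rewrite sum_n_Reals -(subnKC (introT leP Km)).
elim: (m - K)%nat => [|p IH]; first by rewrite addn0.
by rewrite addnS /= IH aK ?Rplus_0_r // ltnS leq_addr.
Qed.

Definition half_dominated (a : nat -> R) := forall j, 0 <= a j <= (/2)^(S j).

Lemma ex_series_half_dominated a : half_dominated a -> ex_series a.
Proof.
move=> a_dom; apply: (ex_series_le _ _ _ ex_series_half_pow) => j.
by rewrite /norm /= /abs /= Rabs_pos_eq; apply a_dom.
Qed.

Lemma Series_half_dominated_ge_term a k : half_dominated a -> a k <= Series a.
Proof.
move=> a_dom; pose b (j : nat) := if j == k then a k else 0.
have <- : Series b = a k.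
  rewrite (Series_finite_support _ k) => [|j kj]; last by rewrite /b gtn_eqF.
  case: k @b => [|k] b; rewrite /= /b eqxx //.
  rewrite sum_eq_R0 => [|j /leP jk]; first lra.
  by rewrite ltn_eqF.
apply: Series_le; last exact: ex_series_half_dominated.
move=> j; rewrite /b; case: eqP => [->|_]; [have := a_dom k | have := a_dom j]; lra.
Qed.

Lemma Series_half_pow_from J :
  (0 < J)%nat -> Series (fun j => if (j < J)%nat then 0 else (/2)^(S j)) = (/2)^J.
Proof.
move=> J0; set c := fun j => _.
have c_dom : half_dominated c.
  by move=> j; rewrite /c; case: ifP => _; have := half_pow_pos (S j); lra.
rewrite (Series_incr_n c J); [|exact/ltP|exact: ex_series_half_dominated].
rewrite sum_eq_R0 => [|j /leP jJ]; last by rewrite /c ifT // -(prednK J0) ltnS.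
rewrite (Series_ext _ (fun k => (/2)^J * (/2)^(S k))) => [|k].
  by rewrite Series_scal_l Series_half_pow; ring.
by rewrite /c ifF ?ltnNge ?leq_addr // -pow_add -plus_n_Sm.
Qed.

Lemma Series_half_dominated_le a J e :
  (0 < J)%nat -> 0 <= e -> half_dominated a ->
  (forall j, (j < J)%nat -> a j <= (/2)^(S j) * e) -> Series a <= e + (/2)^J.
Proof.
move=> J0 e0 a_dom a_head.
pose c j := if (j < J)%nat then 0 else (/2)^(S j).
have ex_c : ex_series c.
  apply: ex_series_half_dominated => j.
  by rewrite /c; case: ifP => _; have := half_pow_pos (S j); lra.
have ex_e : ex_series (fun j => e * (/2)^(S j)) by apply: ex_series_scal_l ex_series_half_pow.
apply: Rle_trans (_ : Series (fun j => e * (/2)^(S j) + c j) <= _).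
  apply: Series_le => [j|]; last exact: ex_series_plus ex_e ex_c.
  split; first by apply a_dom.
  have := half_pow_pos (S j); have := a_dom j; rewrite /c.
  case: ifP => [/a_head|_]; nra.
rewrite Series_plus // Series_scal_l Series_half_pow Series_half_pow_from //; lra.
Qed.

Definition radius {n} (z : 'I_n -> C) : R := 1 + \big[Rmax/0]_(k < n) Cmod (z k).

Lemma radius_ge1 {n} (z : 'I_n -> C) : 1 <= radius z.
Proof.
have : 0 <= \big[Rmax/0]_(k < n) Cmod (z k) by apply: bigmax_ge0.
rewrite /radius; lra.
Qed.

Lemma radius_gt {n} (z : 'I_n -> C) k : Cmod (z k) < radius z.
Proof.
have : Cmod (z k) <= \big[Rmax/0]_(k < n) Cmod (z k).
  by apply: (bigmax_ge _ (fun k => Cmod (z k))); rewrite mem_index_enum.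
rewrite /radius; lra.
Qed.

Lemma radius_lip n (z z' : 'I_n -> C) : Rabs (radius z - radius z') <= dist_n n z z'.
Proof.
rewrite /radius (_ : 1 + _ - _ = \big[Rmax/0]_(k < n) Cmod (z k)
                              - \big[Rmax/0]_(k < n) Cmod (z' k)); last ring.
apply: Rle_trans (bigmax_lip _ _ _) _; apply: bigmax_le => [k|]; last exact: bigmax_ge0.
apply: Rle_trans (Cmod_triangle_inv _ _) _.
by apply: (bigmax_ge _ (fun k => Cmod (z k - z' k)%C)); rewrite mem_index_enum.
Qed.

Lemma iota_n_ord n z (k : 'I_n) : iota_n n z k = z k.
Proof. by rewrite /iota_n valK. Qed.

Lemma iota_n_tail n z j : (n <= j)%nat -> iota_n n z j = RtoC (radius z + INR (j - n)).
Proof. by move=> nj; rewrite /iota_n insubN // -leqNgt. Qed.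

Lemma Cmod_iota_n_tail n z j :
  (n <= j)%nat -> Cmod (iota_n n z j) = radius z + INR (j - n).
Proof.
move=> nj; rewrite iota_n_tail // Cmod_R Rabs_pos_eq //.
have := radius_ge1 z; have := pos_INR (j - n); lra.
Qed.

(* Uniform in [z] because [radius z >= 1]. *)
Lemma iota_n_escape n M : exists N, forall z j, (N <= j)%nat -> M < Cmod (iota_n n z j).
Proof.
have [N MN] := INR_archimed 1 M Rlt_0_1.
exists (n + N)%nat => z j Nj; have nj := leq_trans (leq_addr N n) Nj.
rewrite Cmod_iota_n_tail //; have := radius_ge1 z.
have : INR N <= INR (j - n) by apply/le_INR/leP; rewrite leq_subRL.
lra.
Qed.

Lemma iota_n_coord_lip n z z' j :
  Cmod (iota_n n z j - iota_n n z' j)%C <= dist_n n z z'.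
Proof.
case: (ltnP j n) => [jn|nj].
- rewrite -[j]/(nat_of_ord (Ordinal jn)) !iota_n_ord.
  by apply: (bigmax_ge _ (fun k => Cmod (z k - z' k)%C)); rewrite mem_index_enum.
- rewrite !iota_n_tail // -RtoC_minus Cmod_R.
  rewrite (_ : _ + _ - _ = radius z - radius z'); [exact: radius_lip | ring].
Qed.

Lemma Cmod_iota_n_head_lt_tail {n} z {j l} :
  (j < n)%nat -> (n <= l)%nat -> Cmod (iota_n n z j) < Cmod (iota_n n z l).
Proof.
move=> jn nl; rewrite -[j]/(nat_of_ord (Ordinal jn)) iota_n_ord Cmod_iota_n_tail //.
have := radius_gt z (Ordinal jn); have := pos_INR (l - n); lra.
Qed.

Lemma iota_n_in_Conf_lf n z : in_Conf n z -> in_Conf_lf (iota_n n z).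
Proof.
move=> z_inj; split; last first.
  by move=> M _; have [N escN] := iota_n_escape n M; exists N => j; apply: escN.
have head_tail j l : (j < n)%nat -> (n <= l)%nat -> iota_n n z j <> iota_n n z l.
  by move=> jn nl E; have := Cmod_iota_n_head_lt_tail z jn nl; rewrite E; lra.
move=> j l jl; case: (ltnP j n) => jn; case: (ltnP l n) => ln.
- rewrite -[j]/(nat_of_ord (Ordinal jn)) -[l]/(nat_of_ord (Ordinal ln)) !iota_n_ord.
  by apply: z_inj => /(congr1 val).
- exact: head_tail.
- by move=> E; apply: (head_tail l j).
- rewrite !iota_n_tail // => /RtoC_inj E; apply: jl.
  have /INR_eq jl' : INR (j - n) = INR (l - n) by lra.
  by rewrite -(subnK jn) jl' subnK.
Qed.

Lemma radius_base_n {n} : (0 < n)%nat -> radius (base_n n) = 1 + INR n.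
Proof.
move=> n0; congr (1 + _); apply: Rle_antisym.
- apply: bigmax_le => [k|]; last exact: pos_INR.
  rewrite /base_n Cmod_R Rabs_pos_eq; last exact: pos_INR.
  by apply/le_INR/leP; rewrite addn1.
- have n1n : (n.-1 < n)%nat by rewrite prednK.
  apply: Rle_trans (_ : Cmod (base_n n (Ordinal n1n)) <= _).
    by rewrite /base_n Cmod_R Rabs_pos_eq /= ?addn1 ?prednK //; [apply: Rle_refl | apply: pos_INR].
  by apply: (bigmax_ge _ (fun k => Cmod (base_n n k))); rewrite mem_index_enum.
Qed.

Lemma iota_n_base_n {n} : (0 < n)%nat -> iota_n n (base_n n) = NN.
Proof.
move=> n0; apply: functional_extensionality => j; case: (ltnP j n) => [jn|nj].
  by rewrite -[j]/(nat_of_ord (Ordinal jn)) iota_n_ord.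
rewrite iota_n_tail // radius_base_n // /NN addn1 S_INR -{2}(subnKC nj) plus_INR.
by congr RtoC; ring.
Qed.

Lemma common_delta (P : nat -> R -> Prop) :
  (forall k d d', 0 < d' <= d -> P k d -> P k d') ->
  (forall k, exists d, 0 < d /\ P k d) ->
  forall J, exists d, 0 < d /\ forall k, (k < J)%nat -> P k d.
Proof.
move=> P_mono P_ex; elim=> [|J [d1 [d1_pos P1]]]; first by exists 1; split; [lra|].
have [d2 [d2_pos P2]] := P_ex J; have d_pos := Rmin_pos _ _ d1_pos d2_pos.
exists (Rmin d1 d2); split=> // k; rewrite ltnS leq_eqVlt => /orP [/eqP->|kJ].
- by apply: (P_mono _ d2) => //; split; last exact: Rmin_r.
- by apply: (P_mono _ d1); [split; last exact: Rmin_l | exact: P1].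
Qed.

Lemma sum_f_R0_close K (a b : nat -> R) e :
  (forall k, (k <= K)%nat -> Rabs (a k - b k) < e) ->
  Rabs (sum_f_R0 a K - sum_f_R0 b K) < INR (S K) * e.
Proof.
elim: K => [|K IH] ab; first by have := ab 0%nat (leqnn _); simpl; lra.
have := IH (fun k kK => ab k (leqW kK)); have := ab K.+1 (leqnn _).
have := Rabs_triang (sum_f_R0 a K - sum_f_R0 b K) (a K.+1 - b K.+1).
change (sum_f_R0 a K.+1) with (sum_f_R0 a K + a K.+1).
change (sum_f_R0 b K.+1) with (sum_f_R0 b K + b K.+1).
rewrite (S_INR K.+1) (_ : _ + _ - _ = sum_f_R0 a K - sum_f_R0 b K + (a K.+1 - b K.+1)); last ring.
lra.
Qed.

(* Only the first [N] points of [iota_n n z] can meet the support of [f], for an [N]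
   independent of [z], so [Psum f] is a finite sum of continuous functions of [z]. *)
Lemma Psum_iota_n_cont n f z e :
  cont_C f -> compactly_supported f -> 0 < e ->
  exists d, 0 < d /\ forall z', dist_n n z z' < d ->
    Rabs (Psum f (iota_n n z) - Psum f (iota_n n z')) < e.
Proof.
move=> f_cont [M f_supp] e_pos; have [N escN] := iota_n_escape n M.
have f_tail w k : (N <= k)%nat -> f (iota_n n w k) = 0 by move=> Nk; apply/f_supp/escN.
have N1_pos : 0 < INR (S N) by apply: lt_0_INR; apply/ltP.
pose e' := e / INR (S N).
have [d [d_pos d_cont]] := common_delta
  (fun k d => forall w, Cmod (w - iota_n n z k)%C < d -> Rabs (f w - f (iota_n n z k)) < e')
  (fun k d d' dd' P w wd => P w (Rlt_le_trans _ _ _ wd (proj2 dd')))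
  (fun k => f_cont (iota_n n z k) e' (Rdiv_lt_0_compat _ _ e_pos N1_pos)) (S N).
exists d; split=> // z' zz'.
rewrite /Psum !(Series_finite_support _ N) => [|k Nk|k Nk]; try exact/f_tail/ltnW.
rewrite (_ : e = INR (S N) * e'); last by rewrite /e'; field; lra.
apply: sum_f_R0_close => k kN; rewrite Rabs_minus_sym; apply: d_cont; first by rewrite ltnS.
by rewrite Cmod_minus_sym; apply: Rle_lt_trans zz'; apply: iota_n_coord_lip.
Qed.

Lemma frac_1_plus_bounds {A} : 0 <= A -> 0 <= A / (1 + A) <= Rmin 1 A.
Proof.
move=> A0; have A1 : 0 < 1 + A by lra.
split; first exact: Rdiv_le_0_compat.
apply: Rmin_glb; apply: (Rmult_le_reg_r (1 + A)) => //; field_simplify; nra.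
Qed.

Lemma half_dominated_frac (u : nat -> R) :
  half_dominated (fun j => (/2)^(S j) * (Rabs (u j) / (1 + Rabs (u j)))).
Proof.
move=> j; have := half_pow_pos (S j); have := Rmin_l 1 (Rabs (u j)).
have := frac_1_plus_bounds (Rabs_pos (u j)); split; nra.
Qed.

Lemma half_dominated_coord (x y : nat -> C) :
  half_dominated (fun j => (/2)^(S j) * Rmin (Cmod (x j - y j)%C) 1).
Proof.
move=> j; have := half_pow_pos (S j); have := Rmin_r (Cmod (x j - y j)%C) 1.
have : 0 <= Rmin (Cmod (x j - y j)%C) 1 by apply: Rmin_glb; [apply: Cmod_ge_0 | lra].
split; nra.
Qed.

Lemma Series_coord_le (x y : nat -> C) c :
  (forall j, Cmod (x j - y j)%C <= c) ->
  Series (fun j => (/2)^(S j) * Rmin (Cmod (x j - y j)%C) 1) <= c.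
Proof.
move=> xy_c.
have -> : c = Series (fun j => c * (/2)^(S j)) by rewrite Series_scal_l Series_half_pow Rmult_1_r.
apply: Series_le => [j|]; last exact: ex_series_scal_l ex_series_half_pow.
split; first exact: (proj1 (half_dominated_coord x y j)).
have := half_pow_pos (S j); have := Rmin_l (Cmod (x j - y j)%C) 1; have := xy_c j; nra.
Qed.

Lemma dV_ge0 phi x y : 0 <= dV phi x y.
Proof.
have dom := half_dominated_frac (fun j => Psum (phi j) x - Psum (phi j) y).
exact: Rle_trans (proj1 (dom 0%nat)) (Series_half_dominated_ge_term _ _ dom).
Qed.

Lemma dV_le phi x y J e :
  (0 < J)%nat -> 0 <= e ->
  (forall j, (j < J)%nat -> Rabs (Psum (phi j) x - Psum (phi j) y) <= e) ->
  dV phi x y <= e + (/2)^J.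
Proof.
move=> J0 e0 close; apply: Series_half_dominated_le (half_dominated_frac _) _ => // j jJ.
apply: Rmult_le_compat_l; first exact/Rlt_le/half_pow_pos.
have := frac_1_plus_bounds (Rabs_pos (Psum (phi j) x - Psum (phi j) y)).
have := Rmin_r 1 (Rabs (Psum (phi j) x - Psum (phi j) y)); have := close j jJ; lra.
Qed.

Lemma iota_n_cont n phi : admissible phi -> cont_on (dist_n n) (in_Conf n) (dSigma phi) (iota_n n).
Proof.
move=> [phi_cs _] z _ eps eps_pos; have e_pos : 0 < eps / 3 by lra.
have [N smallN] := pow_lt_1_zero (/2) ltac:(rewrite Rabs_pos_eq; lra) _ e_pos.
have tail_small : (/2)^(S N) < eps / 3.
  by have := smallN (S N) (Nat.le_succ_diag_r N); rewrite Rabs_pos_eq //; apply/Rlt_le/half_pow_pos.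
have [d [d_pos d_close]] := common_delta
  (fun j d => forall z', dist_n n z z' < d ->
     Rabs (Psum (phi j) (iota_n n z) - Psum (phi j) (iota_n n z')) < eps / 3)
  (fun j d d' dd' P z' zz' => P z' (Rlt_le_trans _ _ _ zz' (proj2 dd')))
  (fun j => Psum_iota_n_cont n _ z _ (proj1 (phi_cs j)) (proj2 (phi_cs j)) e_pos) (S N).
exists (Rmin d (eps / 3)); split=> [|z' _ zz']; first exact: Rmin_pos.
have zz'_d := Rlt_le_trans _ _ _ zz' (Rmin_l d (eps / 3)).
have zz'_e := Rlt_le_trans _ _ _ zz' (Rmin_r d (eps / 3)).
have coords := Series_coord_le (iota_n n z) (iota_n n z') _ (iota_n_coord_lip n z z').
have vague := dV_le phi (iota_n n z) (iota_n n z') _ _ (ltn0Sn N) (Rlt_le _ _ e_pos)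
  (fun j jN => Rlt_le _ _ (d_close j jN z' zz'_d)).
rewrite /dSigma; lra.
Qed.

Definition trunc n (x : nat -> C) : 'I_n -> C := fun k => x k.

Lemma trunc_iota_n n : cancel (iota_n n) (trunc n).
Proof. by move=> z; apply: functional_extensionality => k; rewrite /trunc iota_n_ord. Qed.

Lemma trunc_in_Conf n x : in_Conf_lf x -> in_Conf n (trunc n x).
Proof. by move=> [x_inj _] k l kl; apply: x_inj => /val_inj. Qed.

Lemma dSigma_coord phi x y k : (/2)^(S k) * Rmin (Cmod (x k - y k)%C) 1 <= dSigma phi x y.
Proof.
have := Series_half_dominated_ge_term _ k (half_dominated_coord x y).
have := dV_ge0 phi x y; rewrite /dSigma; lra.
Qed.

(* Coordinates of index [k < n] carry weight at least [(/2)^n] in [dSigma]. *)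
Lemma trunc_cont n phi : cont_on (dSigma phi) in_Conf_lf (dist_n n) (trunc n).
Proof.
move=> x _ eps eps_pos; pose m := Rmin (eps / 2) 1.
have m_pos : 0 < m by apply: Rmin_pos; lra.
have w_pos := half_pow_pos n.
exists ((/2)^n * m); split=> [|y _ xy]; first exact: Rmult_lt_0_compat.
apply: Rle_lt_trans (_ : _ <= eps / 2) _; last lra.
apply: bigmax_le => [k|]; last lra.
have := dSigma_coord phi x y k; have := half_pow_le (ltn_ord k).
have := Rmin_l (eps / 2) 1; have := Rmin_r (eps / 2) 1; rewrite -/m.
have := Cmod_ge_0 (x k - y k)%C; rewrite /Rmin; case: Rle_dec => _; rewrite /trunc; nra.
Qed.

Lemma cont_on_comp {A B D : Type} (dA : A -> A -> R) (dB : B -> B -> R) (dD : D -> D -> R)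
    (SA : A -> Prop) (SB : B -> Prop) (f : A -> B) (g : B -> D) :
  cont_on dA SA dB f -> (forall a, SA a -> SB (f a)) -> cont_on dB SB dD g ->
  cont_on dA SA dD (fun a => g (f a)).
Proof.
move=> f_cont f_SB g_cont a Sa eps eps_pos.
have [e [e_pos g_e]] := g_cont _ (f_SB a Sa) eps eps_pos.
have [d [d_pos f_d]] := f_cont a Sa e e_pos.
by exists d; split=> // a' Sa' aa'; apply: g_e; [exact: f_SB | exact: f_d].
Qed.

Lemma homotopic_rel_retract {X Y : Type} (dX : X -> X -> R) (dY : Y -> Y -> R)
    (SX : X -> Prop) (SY : Y -> Prop) (bX : X) (bY : Y) (i : X -> Y) (r : Y -> X) g1 g2 :
  cont_on dY SY dX r -> (forall y, SY y -> SX (r y)) -> r bY = bX -> cancel i r ->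
  homotopic_rel dY SY bY (fun t => i (g1 t)) (fun t => i (g2 t)) ->
  homotopic_rel dX SX bX g1 g2.
Proof.
move=> r_cont r_S r_b iK [H [H_cont [H_S [H_ends H_base]]]].
exists (fun p => r (H p)); split; [|split; [|split]].
- exact: cont_on_comp H_cont H_S r_cont.
- by move=> p /H_S /r_S.
- by move=> s /H_ends [-> ->]; rewrite !iK.
- by move=> t /H_base [-> ->].
Qed.

Theorem mainTheorem4 (n : nat) (Hn : (1 <= n)%nat) (phi : nat -> C -> R)
  (Hphi : admissible phi) :
  (forall z, in_Conf n z -> in_Conf_lf (iota_n n z)) /\
  cont_on (dist_n n) (in_Conf n) (dSigma phi) (iota_n n) /\
  iota_n n (base_n n) = NN /\
  (forall g1 g2 : R -> 'I_n -> C,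
     loop (dist_n n) (in_Conf n) (base_n n) g1 ->
     loop (dist_n n) (in_Conf n) (base_n n) g2 ->
     homotopic_rel (dSigma phi) in_Conf_lf NN
       (fun t => iota_n n (g1 t)) (fun t => iota_n n (g2 t)) ->
     homotopic_rel (dist_n n) (in_Conf n) (base_n n) g1 g2).
Proof.
split; first exact: iota_n_in_Conf_lf.
split; first exact: iota_n_cont.
split; first exact: iota_n_base_n.
move=> g1 g2 _ _; apply: homotopic_rel_retract (trunc_cont n phi) (@trunc_in_Conf n) _ (trunc_iota_n n).
by rewrite -(iota_n_base_n Hn) trunc_iota_n.
Qed.
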